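(* Under the setting below, let $f\in\mathcal{F}$, $0<\epsilon_1\le|\mathcal{U}_A|$, and $\epsilon_{\mathrm{op}}=\alpha\epsilon_1/(4H|\mathcal{U}_A|^2|\mathcal{U}||\mathcal{O}|)$. Suppose $f'=\{m'_{(o,a,u),h},q'_0\}$ is any parameter tuple (not necessarily a valid PSR) with $\max_{o\in\mathcal{O},a\in\mathcal{A},h\in[H-1],u\in\mathcal{U}_{h+1}}\|m_{(o,a,u),h;f}-m'_{(o,a,u),h}\|_\infty\le\epsilon_{\mathrm{op}}$ and $\|q_{0;f}-q'_0\|_\infty\le\epsilon_{\mathrm{op}}$, and define $\mathbb{P}^\pi_{f'}(\tau_H)=e_{o_H}^\top M'_{o_{H-1},a_{H-1},H-1}\cdots M'_{o_1,a_1,1}q'_0\,\pi(\tau_H)$, where $M'_{o,a,h}$ has rows $(m'_{(o,a,u),h})^\top$. Then for every policy $\pi$, $\sum_{\tau_H}|\mathbb{P}^\pi_{f'}(\tau_H)-\mathbb{P}^\pi_f(\tau_H)|\le\epsilon_1$.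
   Context: Process: finite $\mathcal{O},\mathcal{A}$, horizon $H$; histories $\tau_h=(o_1,a_1,\dots,o_h,a_h)$; policies pick $a_h\sim\pi_h(\cdot\mid\tau_{h-1},o_h)$; $\pi(\tau_h)=\prod_{l\le h}\pi_l(a_l\mid\tau_{l-1},o_l)$; $\mathbb{P}^\pi_f(\tau_H)$ is the probability of $\tau_H$ under $\pi$ in model $f$. For a model $f$, a test starting at step $h$ is $t=(o_h,\dots,o_{h+W-1},a_h,\dots,a_{h+W-2})$; $\mathbb{P}_f(t\mid\tau_{h-1})$ is the probability of observing $o_{h:h+W-1}$ when executing $a_{h:h+W-2}$ after $\tau_{h-1}$ ($0$ if unreachable). A set $\mathcal{U}_h$ of tests starting at $h$ is a core test set if for every test $t$ starting at $h$ there is a history-independent $m_{t,h;f}$ with $\mathbb{P}_f(t\mid\tau_{h-1})=\langle m_{t,h;f},q_{\tau_{h-1};f}\rangle$, $q_{\tau_{h-1};f}=[\mathbb{P}_f(u\mid\tau_{h-1})]_{u\in\mathcal{U}_h}$; $q_{0;f}=[\mathbb{P}_f(u)]_{u\in\mathcal{U}_1}$; $M_{o,a,h;f}$ has rows $m_{(o,a,u),h;f}^\top$, $u\in\mathcal{U}_{h+1}$. $\mathcal{U}_{A,h}$: action sequences in $\mathcal{U}_h$; $|\mathcal{U}_A|=\max_h|\mathcal{U}_{A,h}|$; $|\mathcal{U}|=\max_h|\mathcal{U}_h|$. $d_{\mathrm{PSR},h;f}$ is the rank of the matrix with entries $\mathbb{P}_f(t\mid\tau_h)$. Core matrix $K_{h;f}$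 ($h\ge1$): columns $q_{\tau_h^1;f},\dots,q_{\tau_h^{d_{\mathrm{PSR},h;f}};f}$ for histories whose predictive states span all $q_{\tau_h;f}$, chosen to minimize $\|K_{h;f}^\dagger\|_{1\to1}$; $K_{0;f}=q_{0;f}$. Standing assumptions: every $f\in\mathcal{F}$ is a valid PSR with core test sets $\{\mathcal{U}_h\}_{h\in[H]}$ and $\|K_{h;f}^\dagger\|_{1\to1}\le1/\alpha$ for $h\in\{0,\dots,H-1\}$; every $o\in\mathcal{O}$ belongs to $\mathcal{U}_H$ and $m_{o,H;f}=e_o$ (standard basis vector indexing $o$ in $\mathcal{U}_H$). Convention: for $f\in\mathcal{F}$ the vectors $m_{(o,a,u),h;f}$ lie in the column space of $K_{h-1;f}$. *)

From HB Require Import structures.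
From mathcomp Require Import all_boot all_order all_algebra.
Set Implicit Arguments. Unset Strict Implicit. Unset Printing Implicit Defensive.
Import Order.TTheory GRing.Theory Num.Theory.
Local Open Scope ring_scope.

Section PSR.
Variables (R : realFieldType) (O A : finType).

(* A test (o_h,...,o_{h+W-1}, a_h,...,a_{h+W-2}) : observations and actions. *)
Definition test := (seq O * seq A)%type.
(* A history tau_h = (o_1,a_1,...,o_h,a_h), in chronological order. *)
Definition hist := seq (O * A).

Definition dtest : test := ([::], [::]).

(* The process (model f): K tau o = probability of observing o at step
   |tau|+1 given the history tau. *)
Variable K : hist -> O -> R.

Definition is_process : Prop :=
  (forall tau o, 0 <= K tau o) /\ (forall tau, \sum_(o : O) K tau o = 1).

(* A policy: pol tau o a = pi_h(a | tau_{h-1}, o_h) with h = |tau|+1. *)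
Definition is_policy (pol : hist -> O -> A -> R) : Prop :=
  (forall tau o a, 0 <= pol tau o a) /\
  (forall tau o, \sum_(a : A) pol tau o a = 1).

Fixpoint test_prob_raw (tau : hist) (os : seq O) (as_ : seq A) : R :=
  match os, as_ with
  | [:: o], [::] => K tau o
  | o :: os', a :: as' => K tau o * test_prob_raw (rcons tau (o, a)) os' as'
  | _, _ => 0
  end.

(* product of observation probabilities along a history: the history is
   reachable (under some policy) iff this is nonzero *)
Fixpoint hist_prob_aux (pre : hist) (s : hist) : R :=
  match s with
  | [::] => 1
  | (o, a) :: s' => K pre o * hist_prob_aux (rcons pre (o, a)) s'
  end.
Definition hist_prob (tau : hist) : R := hist_prob_aux [::] tau.

(* P_f(t | tau), 0 if tau unreachable *)
Definition Ptest (t : test) (tau : hist) : R :=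
  if hist_prob tau != 0 then test_prob_raw tau t.1 t.2 else 0.

Fixpoint traj_prob_aux (pol : hist -> O -> A -> R) (pre : hist) (s : hist) : R :=
  match s with
  | [::] => 1
  | (o, a) :: s' => K pre o * pol pre o a * traj_prob_aux pol (rcons pre (o, a)) s'
  end.
Definition Ptraj pol (tau : hist) : R := traj_prob_aux pol [::] tau.

Fixpoint pol_prob_aux (pol : hist -> O -> A -> R) (pre : hist) (s : hist) : R :=
  match s with
  | [::] => 1
  | (o, a) :: s' => pol pre o a * pol_prob_aux pol (rcons pre (o, a)) s'
  end.
Definition pol_prob pol (tau : hist) : R := pol_prob_aux pol [::] tau.

Definition test_at (H h : nat) (t : test) : bool :=
  [&& (1 <= h)%N, size t.1 == (size t.2).+1 & (h + size t.2 <= H)%N].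

Variable U : nat -> seq test.

Definition core_test_sets (H : nat) : Prop :=
  forall h, (1 <= h <= H)%N ->
    [/\ uniq (U h), all (test_at H h) (U h) &
     forall t, test_at H h t ->
       exists mt : test -> R, forall tau : hist, size tau = h.-1 ->
         Ptest t tau = \sum_(v <- U h) mt v * Ptest v tau].

Definition qcol (k : nat) (tau : hist) : 'cV[R]_(size (U k.+1)) :=
  \col_i Ptest (nth dtest (U k.+1) i) tau.

Definition Kmat (k : nat) (taus : seq hist) : 'M[R]_(size (U k.+1), size taus) :=
  \matrix_(i, j) Ptest (nth dtest (U k.+1) i) (nth [::] taus j).

(* Moore-Penrose pseudo-inverse of a matrix with linearly independent columns *)
Definition pinv n d (M : 'M[R]_(n, d)) : 'M[R]_(d, n) :=
  invmx (M^T *m M) *m M^T.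

Definition norm11 d n (M : 'M[R]_(d, n)) : R :=
  \big[Num.max/0]_(j < n) \sum_(i < d) `|M i j|.

(* Since the paper's K minimizes this norm, this is the paper's assumption. *)
Definition core_matrix_bound (k : nat) (alpha : R) : Prop :=
  exists taus : seq hist,
    [/\ all (fun tau => size tau == k) taus,
        \rank (Kmat k taus) = size taus,
        (forall tau : hist, size tau = k ->
           exists c : 'cV[R]_(size taus), qcol k tau = Kmat k taus *m c) &
        norm11 (pinv (Kmat k taus)) <= alpha^-1].

Definition in_qspan (k : nat) (v : test -> R) : Prop :=
  exists taus : seq hist, all (fun tau => size tau == k) taus /\
    exists c : 'cV[R]_(size taus),
      \col_(i < size (U k.+1)) v (nth dtest (U k.+1) i) = Kmat k taus *m c.

(* m h o a u = m_{(o,a,u),h;f}, a vector indexed by U_h *)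
Definition psr_params (H : nat) (m : nat -> O -> A -> test -> test -> R) : Prop :=
  forall h o a u, (1 <= h < H)%N -> u \in U h.+1 ->
    in_qspan h.-1 (m h o a u) /\
    forall tau : hist, size tau = h.-1 ->
      Ptest (o :: u.1, a :: u.2) tau = \sum_(v <- U h) m h o a u v * Ptest v tau.

Definition UA_card (H : nat) : nat :=
  \max_(1 <= h < H.+1) size (undup (map snd (U h))).
Definition U_card (H : nat) : nat :=
  \max_(1 <= h < H.+1) size (U h).

(* e_{o_H}^T M'_{o_{H-1},a_{H-1},H-1} ... M'_{o_1,a_1,1} b, starting at step h *)
Fixpoint fwd_eval (m' : nat -> O -> A -> test -> test -> R)
    (h : nat) (b : test -> R) (s : hist) : R :=
  match s with
  | [::] => 0
  | x :: s' =>
      match s' with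
      | [::] => b ([:: x.1], [::])
      | _ => fwd_eval m' h.+1
               (fun u => \sum_(v <- U h) m' h x.1 x.2 u v * b v) s'
      end
  end.

Definition Ptraj' m' (q0' : test -> R) pol (tau : hist) : R :=
  fwd_eval m' 1 q0' tau * pol_prob pol tau.

End PSR.

From HB Require Import structures.
From mathcomp Require Import all_boot all_order all_algebra.
From mathcomp Require Import ring lra.
Import Order.TTheory GRing.Theory Num.Theory.
Local Open Scope ring_scope.
Set Implicit Arguments. Unset Strict Implicit.

(* The trajectory error is a policy-weighted sum, over histories [s] of length
   [H - 1], of the l1 distance on [U_H] between the perturbed forward vector
   [M'_s q'_0] and the true one [M_s q_0], whose entries are joint probabilities.
   Along [s] this distance telescopes into the initial error [q'_0 - q_0] and, at
   each step, the operator error [(M' - M)] applied to the current perturbed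
   vector, each propagated afterwards by the true operators.  These are stable:
   every row [m_(o,a,u)] lies in the span of the predictive states, so a vector
   [w] acts on them like [K c] with [c = K^+ w] and [|c|_1 <= |w|_1 / alpha],
   while predictive states propagate to conditional test probabilities, whose
   sum over a core test set is at most [|U_A|].  By strong induction on the
   length, the perturbed vectors keep policy-weighted mass at most
   [|U_A| + eps1], so each of the [H] steps costs at most [eps1 / (2 H)]. *)

Lemma sumr_const_seq (V : nmodType) (T : Type) (s : seq T) (c : V) :
  \sum_(x <- s) c = c *+ size s.
Proof. by rewrite big_const_seq count_predT iter_addr_0. Qed.

Lemma sumr_pred1_uniq (V : nmodType) (T : eqType) (s : seq T) (a : T) (c : V) :
  uniq s -> \sum_(x <- s | x == a) c = c *+ (a \in s).
Proof. by move=> us; rewrite big_const_seq -count_uniq_mem // iter_addr_0. Qed.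

Lemma ler_sum_subset_uniq (R : numDomainType) (T : eqType) (s1 s2 : seq T) (f : T -> R) :
  uniq s1 -> uniq s2 -> {subset s1 <= s2} -> (forall x, 0 <= f x) ->
  \sum_(x <- s1) f x <= \sum_(x <- s2) f x.
Proof.
move=> u1 u2 s12 f0.
have s12_perm : perm_eq [seq x <- s2 | x \in s1] s1.
  apply: uniq_perm; rewrite ?filter_uniq // => x; rewrite mem_filter.
  by apply/andP/idP => [[]//|x1]; split; last exact: s12.
rewrite [leRHS](bigID [in s1]) /= -[\sum_(x <- s2 | x \in s1) f x]big_filter.
by rewrite (perm_big _ s12_perm) lerDl sumr_ge0.
Qed.

Section HistorySums.
Variables (R : numDomainType) (O A : finType).
Local Notation hist := (hist O A).

Fixpoint sum_hist (n : nat) (F : hist -> R) : R :=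
  if n is n'.+1 then \sum_(x : O * A) sum_hist n' (fun s => F (x :: s)) else F [::].

Lemma eq_sum_hist n F G : (forall s, size s = n -> F s = G s) -> sum_hist n F = sum_hist n G.
Proof.
elim: n F G => [|n IH] F G FG /=; first exact: FG.
by apply: eq_bigr => x _; apply: IH => s sn; apply: FG; rewrite /= sn.
Qed.

Lemma ler_sum_hist n F G :
  (forall s, size s = n -> F s <= G s) -> sum_hist n F <= sum_hist n G.
Proof.
elim: n F G => [|n IH] F G FG /=; first exact: FG.
by apply: ler_sum => x _; apply: IH => s sn; apply: FG; rewrite /= sn.
Qed.

Lemma sum_histD n F G : sum_hist n (fun s => F s + G s) = sum_hist n F + sum_hist n G.
Proof. by elim: n F G => [|n IH] F G //=; rewrite -big_split; apply: eq_bigr. Qed.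

Lemma sum_histZ n c F : sum_hist n (fun s => c * F s) = c * sum_hist n F.
Proof. by elim: n F => [|n IH] F //=; rewrite mulr_sumr; apply: eq_bigr. Qed.

Lemma sum_hist_sum (I : Type) (r : seq I) n (F : I -> hist -> R) :
  sum_hist n (fun s => \sum_(j <- r) F j s) = \sum_(j <- r) sum_hist n (F j).
Proof.
elim: n F => [|n IH] F //=; rewrite exchange_big.
by apply: eq_bigr => x _; rewrite (IH (fun j s => F j (x :: s))).
Qed.

Lemma sum_hist_rcons n F :
  sum_hist n.+1 F = sum_hist n (fun s => \sum_(x : O * A) F (rcons s x)).
Proof.
elim: n F => [|n IH] F //.
rewrite -[LHS]/(\sum_(y : O * A) sum_hist n.+1 (fun s => F (y :: s))).
by apply: eq_bigr => y _; rewrite IH.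
Qed.

Lemma sum_hist_tuple n (F : hist -> R) : \sum_(t : n.-tuple (O * A)) F t = sum_hist n F.
Proof.
elim: n F => [|n IH] F /=.
  rewrite (eq_bigr (fun _ => F [::])) => [|t _]; last by rewrite tuple0.
  by rewrite sumr_const card_tuple.
rewrite (reindex (fun p : (O * A) * n.-tuple (O * A) => [tuple of p.1 :: p.2])) /=.
  rewrite -(pair_bigA _ (fun x (t : n.-tuple (O * A)) => F (x :: t))) /=.
  by apply: eq_bigr => x _; exact: (IH (fun s => F (x :: s))).
apply: onW_bij; exists (fun t : n.+1.-tuple (O * A) => (thead t, [tuple of behead t])).
  by case=> x t /=; rewrite theadE; congr pair; apply: val_inj.
by move=> t; rewrite [t in RHS]tuple_eta; apply: val_inj.
Qed.

End HistorySums.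

Section Operators.
Variables (R : numDomainType) (O A : finType).
Local Notation hist := (hist O A).
Local Notation test := (test O A).
Variable U : nat -> seq test.
Implicit Types (mm : nat -> O -> A -> test -> test -> R) (b f g : test -> R).

Definition op_step mm h (x : O * A) b : test -> R :=
  fun u => \sum_(v <- U h) mm h x.1 x.2 u v * b v.

Fixpoint op_prod mm h b (s : hist) : test -> R :=
  if s is x :: s' then op_prod mm h.+1 (op_step mm h x b) s' else b.

Definition norm1 h b : R := \sum_(u <- U h) `|b u|.

Lemma norm1_ge0 h b : 0 <= norm1 h b.
Proof. exact: sumr_ge0. Qed.

Lemma eq_in_norm1 h f g : {in U h, f =1 g} -> norm1 h f = norm1 h g.
Proof. by move=> fg; apply: eq_big_seq => u uU; rewrite fg. Qed.

Lemma eq_op_prod mm h f g s : f =1 g -> op_prod mm h f s =1 op_prod mm h g s.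
Proof.
elim: s h f g => [|x s IH] h f g fg //=; apply: IH => u.
by apply: eq_bigr => v _; rewrite fg.
Qed.

Lemma eq_in_op_prod mm h f g s :
  {in U h, f =1 g} -> {in U (h + size s), op_prod mm h f s =1 op_prod mm h g s}.
Proof.
elim: s h f g => [|x s IH] h f g fg /=; first by rewrite addn0.
rewrite -addSnnS; apply: IH => u _.
by apply: eq_big_seq => v vU; rewrite fg.
Qed.

Lemma op_prodD mm h f g s u :
  op_prod mm h (fun v => f v + g v) s u = op_prod mm h f s u + op_prod mm h g s u.
Proof.
elim: s h f g => [|x s IH] h f g //=; rewrite -IH; apply: eq_op_prod => v.
by rewrite /op_step -big_split; apply: eq_bigr => w _; rewrite mulrDr.
Qed.

Lemma op_prodZ mm h c f s u :
  op_prod mm h (fun v => c * f v) s u = c * op_prod mm h f s u.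
Proof.
elim: s h f => [|x s IH] h f //=; rewrite -IH; apply: eq_op_prod => v.
by rewrite /op_step mulr_sumr; apply: eq_bigr => w _; rewrite mulrCA.
Qed.

Lemma op_prodB mm h f g s u :
  op_prod mm h (fun v => f v - g v) s u = op_prod mm h f s u - op_prod mm h g s u.
Proof.
rewrite (eq_op_prod _ _ (g := fun v => f v + -1 * g v)) => [|v]; last by rewrite mulN1r.
by rewrite op_prodD op_prodZ mulN1r.
Qed.

Lemma op_prod_sum (I : Type) (r : seq I) (c : I -> R) (F : I -> test -> R) mm h s u :
  op_prod mm h (fun v => \sum_(j <- r) c j * F j v) s u =
  \sum_(j <- r) c j * op_prod mm h (F j) s u.
Proof.
elim: r => [|j r IH].
  rewrite big_nil (eq_op_prod _ _ (g := fun _ => 0 * 0)) => [|v]; last first.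
    by rewrite big_nil mul0r.
  by rewrite (op_prodZ _ _ _ (fun _ => 0)) mul0r.
rewrite big_cons -IH -op_prodZ -op_prodD; apply: eq_op_prod => v.
by rewrite big_cons.
Qed.

Lemma norm1_sum_le (I : Type) (r : seq I) (c : I -> R) (F : I -> test -> R) h :
  norm1 h (fun u => \sum_(j <- r) c j * F j u) <= \sum_(j <- r) `|c j| * norm1 h (F j).
Proof.
rewrite /norm1; under [leRHS]eq_bigr do rewrite mulr_sumr.
rewrite exchange_big /=; apply: ler_sum => u _.
by apply: le_trans (ler_norm_sum _ _ _) _; apply: ler_sum => j _; rewrite normrM.
Qed.

End Operators.

Lemma fwd_eval_rcons (R : realFieldType) (O A : finType) (U : nat -> seq (test O A))
    (mm : nat -> O -> A -> test O A -> test O A -> R) h (b : test O A -> R) s x :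
  fwd_eval U mm h b (rcons s x) = op_prod U mm h b s ([:: x.1], [::]).
Proof.
elim: s h b => [|y s IH] h b //=; rewrite -IH.
by case: s {IH}.
Qed.

Section Process.
Variables (R : realFieldType) (O A : finType).
Local Notation hist := (hist O A).
Local Notation test := (test O A).
Variables (K : hist -> O -> R) (pol : hist -> O -> A -> R).
Hypotheses (HK : is_process K) (Hpol : is_policy pol).

Lemma obs_prob_ge0 tau o : 0 <= K tau o. Proof. by case: HK. Qed.
Lemma sum_obs_prob tau : \sum_o K tau o = 1. Proof. by case: HK. Qed.
Lemma act_prob_ge0 tau o a : 0 <= pol tau o a. Proof. by case: Hpol. Qed.
Lemma sum_act_prob tau o : \sum_a pol tau o a = 1. Proof. by case: Hpol. Qed.

Lemma sum_act_prob_pairs tau : \sum_(x : O * A) pol tau x.1 x.2 = #|O|%:R.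
Proof.
rewrite -(pair_bigA _ (fun o a => pol tau o a)) /=.
by rewrite (eq_bigr (fun _ => 1)) ?sumr_const // => o _; rewrite sum_act_prob.
Qed.

Lemma hist_prob_aux_cat p s1 s2 :
  hist_prob_aux K p (s1 ++ s2) = hist_prob_aux K p s1 * hist_prob_aux K (p ++ s1) s2.
Proof.
elim: s1 p => [|[o a] s1 IH] p /=; first by rewrite cats0 mul1r.
by rewrite IH cat_rcons mulrA.
Qed.

Lemma hist_prob_rcons tau x : hist_prob K (rcons tau x) = hist_prob K tau * K tau x.1.
Proof. by rewrite -cats1 /hist_prob hist_prob_aux_cat; case: x => o a /=; rewrite mulr1. Qed.

Lemma hist_prob_aux_ge0 p s : 0 <= hist_prob_aux K p s.
Proof. by elim: s p => [|[o a] s IH] p //=; rewrite mulr_ge0 ?obs_prob_ge0. Qed.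

Lemma pol_prob_aux_ge0 p s : 0 <= pol_prob_aux pol p s.
Proof. by elim: s p => [|[o a] s IH] p //=; rewrite mulr_ge0 ?act_prob_ge0. Qed.

Lemma pol_prob_aux_rcons p s x :
  pol_prob_aux pol p (rcons s x) = pol_prob_aux pol p s * pol (p ++ s) x.1 x.2.
Proof.
elim: s p => [|[o a] s IH] p /=; first by case: x => o a /=; rewrite cats0 mulr1 mul1r.
by rewrite IH cat_rcons mulrA.
Qed.

Lemma traj_prob_auxE p s :
  traj_prob_aux K pol p s = hist_prob_aux K p s * pol_prob_aux pol p s.
Proof. by elim: s p => [|[o a] s IH] p /=; rewrite ?mulr1 // IH; ring. Qed.

Lemma test_prob_raw_cons tau o os a w :
  test_prob_raw K tau (o :: os) (a :: w) = K tau o * test_prob_raw K (rcons tau (o, a)) os w.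
Proof. by case: os. Qed.

Lemma test_prob_raw_ge0 tau os w : 0 <= test_prob_raw K tau os w.
Proof.
elim: os tau w => [|o os IH] tau [|a w] //; last first.
  by rewrite test_prob_raw_cons mulr_ge0 ?obs_prob_ge0.
by case: os {IH} => [|? ?] /=; rewrite ?obs_prob_ge0.
Qed.

Definition joint_prob (tau : hist) (u : test) : R :=
  hist_prob K tau * test_prob_raw K tau u.1 u.2.

Lemma Ptest_joint u tau : Ptest K u tau = (hist_prob K tau)^-1 * joint_prob tau u.
Proof.
rewrite /Ptest /joint_prob; case: eqP => [->|/eqP tau_reach]; first by rewrite invr0 !mul0r.
by rewrite mulKf.
Qed.

Definition pred_state (tau : hist) : test -> R := fun u => Ptest K u tau.

Lemma norm_Ptest_le u tau : `|Ptest K u tau| <= test_prob_raw K tau u.1 u.2.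
Proof.
by rewrite /Ptest; case: ifP; rewrite ?normr0 ?ger0_norm ?test_prob_raw_ge0.
Qed.

Definition pol_wsum (pre : hist) (n : nat) (F : hist -> R) : R :=
  sum_hist n (fun s => pol_prob_aux pol pre s * F s).

Lemma pol_wsum_cons pre n F : pol_wsum pre n.+1 F =
  \sum_(x : O * A) pol pre x.1 x.2 * pol_wsum (rcons pre x) n (fun s => F (x :: s)).
Proof.
apply: eq_bigr => -[o a] _; rewrite /pol_wsum -sum_histZ.
by apply: eq_sum_hist => s _ /=; rewrite mulrA.
Qed.

Lemma ler_pol_wsum pre n F G :
  (forall s, size s = n -> F s <= G s) -> pol_wsum pre n F <= pol_wsum pre n G.
Proof.
by move=> FG; apply: ler_sum_hist => s sn; rewrite ler_wpM2l ?pol_prob_aux_ge0 ?FG.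
Qed.

Lemma pol_wsumD pre n F G :
  pol_wsum pre n (fun s => F s + G s) = pol_wsum pre n F + pol_wsum pre n G.
Proof. by rewrite /pol_wsum -sum_histD; apply: eq_sum_hist => s _; rewrite mulrDr. Qed.

Lemma pol_wsumZ pre n c F : pol_wsum pre n (fun s => c * F s) = c * pol_wsum pre n F.
Proof. by rewrite /pol_wsum -sum_histZ; apply: eq_sum_hist => s _; rewrite mulrCA. Qed.

Lemma pol_wsum_sum (I : Type) (r : seq I) pre n (F : I -> hist -> R) :
  pol_wsum pre n (fun s => \sum_(j <- r) F j s) = \sum_(j <- r) pol_wsum pre n (F j).
Proof. by rewrite /pol_wsum -sum_hist_sum; apply: eq_sum_hist => s _; rewrite mulr_sumr. Qed.

Lemma pol_wsum_hist_prob pre n tau : pol_wsum pre n (hist_prob_aux K tau) = 1.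
Proof.
elim: n pre tau => [|n IH] pre tau; first by rewrite /pol_wsum /= mulr1.
rewrite pol_wsum_cons -(sum_obs_prob tau).
transitivity (\sum_(x : O * A) pol pre x.1 x.2 * K tau x.1).
  by apply: eq_bigr => -[o a] _ /=; rewrite pol_wsumZ IH mulr1.
rewrite -(pair_bigA _ (fun o a => pol pre o a * K tau o)) /=.
by apply: eq_bigr => o _; rewrite -mulr_suml sum_act_prob mul1r.
Qed.

Definition obs_tails (o : O) (L : seq (seq O)) : seq (seq O) :=
  [seq behead os | os <- L & ohead os == Some o].

Lemma sum_obs_tails (L : seq (seq O)) (F : seq O -> R) : F [::] = 0 ->
  \sum_(os <- L) F os = \sum_o \sum_(os <- obs_tails o L) F (o :: os).
Proof.
move=> F0; transitivity (\sum_(os <- L) \sum_o (if ohead os == Some o then F os else 0)).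
  apply: eq_bigr => -[|o0 os] _ /=; first by rewrite big1.
  rewrite (bigD1 o0) //= eqxx big1 ?addr0 // => o /negbTE o_neq.
  by case: eqP => // -[o_eq]; rewrite o_eq eqxx in o_neq.
rewrite exchange_big /=; apply: eq_bigr => o _.
rewrite -big_mkcond -big_filter big_map; apply: eq_big_seq => os.
by rewrite mem_filter; case: os => //= o' os /andP[/eqP [->]].
Qed.

Lemma obs_tails_uniq o L : uniq L -> uniq (obs_tails o L).
Proof.
move=> uL; rewrite map_inj_in_uniq ?filter_uniq // => -[|a s] [|b t];
by rewrite !mem_filter //= => /andP[/eqP[->] _] /andP[/eqP[->] _] ->.
Qed.

Lemma sum_test_prob_obs_le1 w tau (L : seq (seq O)) :
  uniq L -> \sum_(os <- L) test_prob_raw K tau os w <= 1.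
Proof.
elim: w tau L => [|a w IH] tau L uL; rewrite sum_obs_tails // -(sum_obs_prob tau);
  apply: ler_sum => o _.
  rewrite (eq_bigr (fun os => if os == [::] then K tau o else 0)) => [|[|o' os] _] //.
  rewrite -big_mkcond sumr_pred1_uniq ?obs_tails_uniq //.
  by case: (_ \in _); rewrite ?mulr1n ?mulr0n ?obs_prob_ge0.
under eq_bigr do rewrite test_prob_raw_cons.
by rewrite -mulr_sumr ler_piMr ?obs_prob_ge0 ?IH ?obs_tails_uniq.
Qed.

Lemma sum_test_prob_le_actions (Us : seq test) tau : uniq Us ->
  \sum_(u <- Us) test_prob_raw K tau u.1 u.2 <= (size (undup (map snd Us)))%:R.
Proof.
move=> uUs; set W := undup (map snd Us).
rewrite (eq_big_seq (fun u => \sum_(w <- W | w == u.2) test_prob_raw K tau u.1 u.2));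
  last by move=> u u_in; rewrite sumr_pred1_uniq ?undup_uniq // mem_undup map_f.
rewrite (eq_bigr _ (fun u _ => big_mkcond _ _)) exchange_big /=.
apply: le_trans (_ : _ <= \sum_(w <- W) 1) _; last by rewrite sumr_const_seq.
apply: ler_sum => w _; rewrite -big_mkcond -big_filter.
rewrite (eq_big_seq (fun u => test_prob_raw K tau u.1 w)); last first.
  by move=> u; rewrite mem_filter => /andP[/eqP-> _].
rewrite -(big_map fst xpredT (fun os => test_prob_raw K tau os w)).
apply: sum_test_prob_obs_le1; rewrite map_inj_in_uniq ?filter_uniq // => -[os a] [os' a'].
by rewrite !mem_filter /= => /andP[/eqP<- _] /andP[/eqP<- _] /= ->.
Qed.

End Process.

Section CoreMatrix.
Variable R : realFieldType.

Lemma gram_unitmx p d (M : 'M[R]_(p, d)) : \rank M = d -> M^T *m M \in unitmx.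
Proof.
move=> rkM; rewrite -row_free_unit -kermx_eq0; apply/eqP/row_matrixP => i.
rewrite row0; set v := row i _.
have vMM : v *m (M^T *m M) = 0 by apply/sub_kermxP; rewrite row_sub.
set z := v *m M^T.
have zz : z *m z^T = 0 by rewrite /z trmx_mul trmxK !mulmxA -(mulmxA v) vMM mul0mx.
have z0 : z = 0.
  have sq0 : \sum_k z 0 k ^+ 2 = 0.
    transitivity ((z *m z^T) 0 0); last by rewrite zz mxE.
    by rewrite [RHS]mxE; apply: eq_bigr => k _; rewrite [z^T _ _]mxE expr2.
  apply/rowP => j; rewrite [RHS]mxE; apply/eqP; rewrite -sqrf_eq0.
  by move/psumr_eq0P: sq0 => /(_ (fun k _ => sqr_ge0 _) j isT) ->.
apply: (row_free_inj (A := M^T)); first by rewrite /row_free mxrank_tr rkM.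
by rewrite /= -/z z0 mul0mx.
Qed.

Lemma mulmx_pinv p d (M : 'M[R]_(p, d)) : \rank M = d -> pinv M *m M = 1%:M.
Proof. by move=> rkM; rewrite /pinv -mulmxA mulVmx ?gram_unitmx. Qed.

Lemma trmx_mul_pinv_resid p d (M : 'M[R]_(p, d)) (w : 'cV_p) :
  \rank M = d -> M^T *m (w - M *m (pinv M *m w)) = 0.
Proof.
by move=> rkM; rewrite mulmxBr /pinv !mulmxA mulmxV ?gram_unitmx // mul1mx subrr.
Qed.

Lemma norm1_mulmx_le p q (M : 'M[R]_(p, q)) (v : 'cV_q) :
  \sum_i `|(M *m v) i 0| <= norm11 M * \sum_j `|v j 0|.
Proof.
apply: le_trans (_ : _ <= \sum_i \sum_j `|M i j| * `|v j 0|) _.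
  apply: ler_sum => i _; rewrite mxE; apply: le_trans (ler_norm_sum _ _ _) _.
  by apply: ler_sum => j _; rewrite normrM.
rewrite exchange_big mulr_sumr; apply: ler_sum => j _ /=.
by rewrite -mulr_suml ler_wpM2r // (le_bigmax _ (fun j => \sum_i `|M i j|)).
Qed.

Lemma norm11_pinv_col_ge1 p d (M : 'M[R]_(p, d)) (j : 'I_d) :
  \rank M = d -> 1 <= norm11 (pinv M) * \sum_i `|M i j|.
Proof.
move=> rkM; have := norm1_mulmx_le (pinv M) (col j M).
have -> : \sum_i `|(pinv M *m col j M) i 0| = 1.
  rewrite colE mulmxA mulmx_pinv // mul1mx (bigD1 j) //= mxE !eqxx normr1.
  by rewrite big1 ?addr0 // => i /negbTE ij; rewrite mxE ij normr0.
by under [X in _ <= _ * X]eq_bigr do rewrite mxE.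
Qed.

End CoreMatrix.

Section CoreProjection.
Variables (R : realFieldType) (O A : finType).
Local Notation hist := (hist O A).
Local Notation test := (test O A).
Variables (K : hist -> O -> R) (U : nat -> seq test).

Definition vecU k (b : test -> R) : 'cV[R]_(size (U k.+1)) :=
  \col_i b (nth (dtest O A) (U k.+1) i).

Lemma sum_core_vecU k (f b : test -> R) :
  \sum_(v <- U k.+1) f v * b v = ((vecU k f)^T *m vecU k b) 0 0.
Proof.
by rewrite mxE (big_nth (dtest O A)) big_mkord; apply: eq_bigr => i _; rewrite !mxE.
Qed.

Lemma norm1_vecU k (b : test -> R) : norm1 U k.+1 b = \sum_i `|vecU k b i 0|.
Proof.
by rewrite /norm1 (big_nth (dtest O A)) big_mkord; apply: eq_bigr => i _; rewrite mxE.
Qed.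

Lemma qspan_orth_pinv_resid k taus (v w : test -> R) :
  \rank (Kmat K U k taus) = size taus ->
  (forall tau, size tau = k -> exists c, qcol K U k tau = Kmat K U k taus *m c) ->
  in_qspan K U k v ->
  (vecU k v)^T *m (vecU k w - Kmat K U k taus *m (pinv (Kmat K U k taus) *m vecU k w)) = 0.
Proof.
set r := _ - _ => rkK spanK [taus' [taus'_k [c vK]]].
have qcol_orth tau : size tau = k -> (qcol K U k tau)^T *m r = 0.
  by case/spanK => c' ->; rewrite trmx_mul -mulmxA trmx_mul_pinv_resid ?mulmx0.
have Kmat_orth : (Kmat K U k taus')^T *m r = 0.
  apply/matrixP => j i; rewrite (ord1 i).
  have /eqP/qcol_orth qj : size (nth [::] taus' j) == k.
    by apply: (allP taus'_k); rewrite mem_nth.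
  transitivity (((qcol K U k (nth [::] taus' j))^T *m r) 0 0); last by rewrite qj !mxE.
  by rewrite !mxE; apply: eq_bigr => l _; rewrite !mxE.
by rewrite [vecU k v]vK trmx_mul -mulmxA Kmat_orth mulmx0.
Qed.

End CoreProjection.

Section Perturbation.
Variables (R : realFieldType) (O A : finType) (H : nat).
Local Notation hist := (hist O A).
Local Notation test := (test O A).
Variables (U : nat -> seq test) (K : hist -> O -> R)
  (m m' : nat -> O -> A -> test -> test -> R) (q0' : test -> R)
  (pol : hist -> O -> A -> R) (alpha eps1 : R).

Local Notation N := (UA_card U H).
Local Notation Uc := (U_card U H).
Local Notation wsum := (pol_wsum pol).
Local Notation q := (pred_state K).

Definition eps_op : R := alpha * eps1 / (4 * H%:R * N%:R ^+ 2 * Uc%:R * #|O|%:R).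

Hypothesis H_gt0 : (0 < H)%N.
Hypothesis HK : is_process K.
Hypothesis Hcore : core_test_sets K U H.
Hypothesis alpha_gt0 : 0 < alpha.
Hypothesis Hcm : forall k, (k < H)%N -> core_matrix_bound K U k alpha.
Hypothesis obs_core : forall o : O, ([:: o], [::]) \in U H.
Hypothesis Hpsr : psr_params K U H m.
Hypothesis eps1_gt0 : 0 < eps1.
Hypothesis eps1_le : eps1 <= N%:R.
Hypothesis Hm' : forall h o a u v, (1 <= h < H)%N -> u \in U h.+1 -> v \in U h ->
  `|m h o a u v - m' h o a u v| <= eps_op.
Hypothesis Hq0' : forall u, u \in U 1%N -> `|Ptest K u [::] - q0' u| <= eps_op.
Hypothesis Hpol : is_policy pol.

Lemma core_uniq k : (1 <= k <= H)%N -> uniq (U k).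
Proof. by case/Hcore. Qed.

Lemma size_actions_le_UA k : (1 <= k <= H)%N -> (size (undup (map snd (U k))) <= N)%N.
Proof.
move=> hk; rewrite /UA_card.
by apply: (@leq_bigmax_seq _ _ xpredT (fun h => size (undup (map snd (U h)))));
  rewrite // mem_index_iota ltnS.
Qed.

Lemma size_core_le_Uc k : (1 <= k <= H)%N -> (size (U k) <= Uc)%N.
Proof.
move=> hk; rewrite /U_card.
by apply: (@leq_bigmax_seq _ _ xpredT (fun h => size (U h))); rewrite // mem_index_iota ltnS.
Qed.

Lemma sum_test_prob_le_UA k tau : (1 <= k <= H)%N ->
  \sum_(u <- U k) test_prob_raw K tau u.1 u.2 <= N%:R.
Proof.
move=> hk; apply: le_trans (sum_test_prob_le_actions HK tau (core_uniq hk)) _.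
by rewrite ler_nat size_actions_le_UA.
Qed.

Lemma card_obs_gt0 : (0 < #|O|)%N.
Proof.
apply/card_gt0P; case: (pickP (@predT O)) => [o _|O0]; first by exists o.
by have := sum_obs_prob HK [::]; rewrite big_pred0 // => /esym/eqP; rewrite oner_eq0.
Qed.

Lemma UA_card_gt0 : (0 < N)%N.
Proof.
case/card_gt0P: card_obs_gt0 => o _.
have H_in : (1 <= H <= H)%N by rewrite H_gt0 leqnn.
apply: leq_trans (size_actions_le_UA H_in).
have : [::] \in undup (map snd (U H)) by rewrite mem_undup (map_f snd (obs_core o)).
by case: (undup _).
Qed.

Lemma U_card_gt0 : (0 < Uc)%N.
Proof.
case/card_gt0P: card_obs_gt0 => o _.
have H_in : (1 <= H <= H)%N by rewrite H_gt0 leqnn.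
apply: leq_trans (size_core_le_Uc H_in).
by have := obs_core o; case: (U H).
Qed.

Lemma op_step_joint h tau x u : size tau = h.-1 -> (1 <= h < H)%N -> u \in U h.+1 ->
  op_step U m h x (joint_prob K tau) u = joint_prob K (rcons tau x) u.
Proof.
case: x => o a tau_h hh uU; rewrite /op_step /joint_prob hist_prob_rcons /=.
have [->|tau_reach] := eqVneq (hist_prob K tau) 0.
  by rewrite !mul0r; apply: big1 => v _; rewrite mul0r mulr0.
have [_ /(_ tau tau_h)] := Hpsr o a hh uU; rewrite /Ptest tau_reach => psr_eq.
have {}psr_eq : test_prob_raw K tau (o :: u.1) (a :: u.2) =
  \sum_(v <- U h) m h o a u v * test_prob_raw K tau v.1 v.2 := psr_eq.
rewrite -mulrA -test_prob_raw_cons psr_eq mulr_sumr.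
by apply: eq_bigr => v _; rewrite mulrCA.
Qed.

Lemma op_prod_joint s h tau : size tau = h.-1 -> (1 <= h)%N -> (h + size s <= H)%N ->
  {in U (h + size s), op_prod U m h (joint_prob K tau) s =1 joint_prob K (tau ++ s)}.
Proof.
elim: s h tau => [|x s IH] h tau tau_h h1 hH u /=; first by rewrite !cats0 addn0.
rewrite -addSnnS => uU; rewrite (eq_in_op_prod _ (g := joint_prob K (rcons tau x))) //.
- by rewrite IH ?cat_rcons ?size_rcons ?tau_h ?prednK // addSnnS.
- move=> v vU; apply: op_step_joint => //; rewrite h1 /=.
  by apply: leq_trans hH; rewrite addnS ltnS leq_addr.
Qed.

Lemma op_prod_pred0_obs s o a : size s = H.-1 ->
  op_prod U m 1 (q [::]) s ([:: o], [::]) = hist_prob K (rcons s (o, a)).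
Proof.
move=> sH; have sH' : (1 + size s)%N = H by rewrite sH add1n prednK.
rewrite (eq_op_prod _ _ _ (g := joint_prob K [::])) => [|v]; last first.
  by rewrite /pred_state Ptest_joint /hist_prob /= invr1 mul1r.
by rewrite op_prod_joint ?sH' // /joint_prob hist_prob_rcons.
Qed.

Lemma norm1_op_prod_pred s h tau : size tau = h.-1 -> (1 <= h)%N -> (h + size s <= H)%N ->
  norm1 U (h + size s) (op_prod U m h (q tau) s) <= hist_prob_aux K tau s * N%:R.
Proof.
move=> tau_h h1 hH; set p := hist_prob K tau.
have p_ge0 : 0 <= p := hist_prob_aux_ge0 HK _ _.
have pp1 : p^-1 * p <= 1 by have [->|/mulVf->] := eqVneq p 0; rewrite ?invr0 ?mul0r.
rewrite /norm1 (eq_big_seq (fun u => p^-1 * p * hist_prob_aux K tau s *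
    test_prob_raw K (tau ++ s) u.1 u.2)) => [|u uU]; last first.
  rewrite (eq_op_prod _ _ _ (g := fun v => p^-1 * joint_prob K tau v)) => [|v];
    last exact: Ptest_joint.
  rewrite op_prodZ op_prod_joint // /joint_prob /hist_prob hist_prob_aux_cat !mulrA.
  by rewrite ger0_norm // !mulr_ge0 ?invr_ge0 ?hist_prob_aux_ge0 ?test_prob_raw_ge0.
rewrite -mulr_sumr; apply: ler_pM.
- by rewrite !mulr_ge0 ?invr_ge0 ?hist_prob_aux_ge0.
- by rewrite sumr_ge0 // => u _; rewrite test_prob_raw_ge0.
- by rewrite -[leRHS]mul1r ler_wpM2r ?hist_prob_aux_ge0.
- by apply: sum_test_prob_le_UA; rewrite hH andbT (leq_trans h1) ?leq_addr.
Qed.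

Lemma wsum_norm1_op_prod_pred n h pre tau : size tau = h.-1 -> (1 <= h)%N -> (h + n <= H)%N ->
  wsum pre n (fun s => norm1 U (h + n) (op_prod U m h (q tau) s)) <= N%:R.
Proof.
move=> tau_h h1 hH.
apply: le_trans (_ : wsum pre n (fun s => N%:R * hist_prob_aux K tau s) <= _).
  by apply: ler_pol_wsum => // s sn; rewrite mulrC -sn norm1_op_prod_pred ?sn.
by rewrite pol_wsumZ // pol_wsum_hist_prob // mulr1.
Qed.

Lemma norm1_pred_state_le k tau : (1 <= k <= H)%N -> norm1 U k (q tau) <= N%:R.
Proof.
move=> hk; apply: le_trans (sum_test_prob_le_UA tau hk).
by apply: ler_sum => u _; apply: norm_Ptest_le.
Qed.

Lemma pred_state0_neq0 : exists2 u, u \in U 1 & Ptest K u [::] != 0.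
Proof.
have H1 : (1 <= 1 <= H)%N by rewrite leqnn H_gt0.
have [_ _ core1] := Hcore H1.
have [/hasP[u uU nz]|/hasPn all0] := boolP (has (fun u => Ptest K u [::] != 0) (U 1)).
  by exists u.
have K0 o : K [::] o = 0.
  have [mt /(_ [::] erefl)] := core1 ([:: o], [::]) H_gt0.
  rewrite big1_seq => [|v /andP[_ vU]]; last by rewrite (eqP (negbNE (all0 v vU))) mulr0.
  by rewrite /Ptest /hist_prob /= oner_neq0.
by have := sum_obs_prob HK [::]; rewrite big1 // => /eqP; rewrite eq_sym oner_eq0.
Qed.

(* [K_0^+] maps a column of [K_0], whose l1 norm is at most [N], to a unit vector. *)
Lemma UA_div_alpha_ge1 : 1 <= N%:R / alpha.
Proof.
have H1 : (1 <= 1 <= H)%N by rewrite leqnn H_gt0.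
have [taus [_ rkK spanK normK]] := Hcm H_gt0.
have taus_gt0 : (0 < size taus)%N.
  rewrite lt0n; apply/eqP => taus0; have [u uU /eqP] := pred_state0_neq0; apply.
  have u_idx : (index u (U 1) < size (U 1))%N by rewrite index_mem.
  have [c /matrixP/(_ (Ordinal u_idx) 0)] := spanK [::] erefl.
  rewrite !mxE /= nth_index // => ->; apply: big1 => j _.
  by suff : (j < 0)%N by []; rewrite -taus0 ltn_ord.
pose j0 := Ordinal taus_gt0.
have col_le : \sum_i `|Kmat K U 0 taus i j0| <= N%:R.
  have -> : \sum_i `|Kmat K U 0 taus i j0| = norm1 U 1 (q (nth [::] taus j0)).
    by rewrite norm1_vecU; apply: eq_bigr => i _; rewrite !mxE.
  exact: norm1_pred_state_le.
have alphaV_ge0 : 0 <= alpha^-1 by rewrite invr_ge0 ltW.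
have := norm11_pinv_col_ge1 j0 rkK.
move/le_trans/(_ (ler_wpM2r (sumr_ge0 _ (fun i _ => normr_ge0 _)) normK)).
by move/le_trans/(_ (ler_wpM2l alphaV_ge0 col_le)); rewrite mulrC.
Qed.

Lemma UA_div_alpha_ge0 : 0 <= N%:R / alpha.
Proof. exact: le_trans ler01 UA_div_alpha_ge1. Qed.

(* The rows [m_(o,a,u),k+1] lie in the span of the predictive states, so they do
   not see the component of [w] orthogonal to the columns of the core matrix. *)
Lemma op_step_core_decomp k taus (w : test -> R) x u : (k.+1 < H)%N ->
  \rank (Kmat K U k taus) = size taus ->
  (forall tau, size tau = k -> exists c, qcol K U k tau = Kmat K U k taus *m c) ->
  u \in U k.+2 ->
  op_step U m k.+1 x w u = \sum_(j < size taus)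
    (pinv (Kmat K U k taus) *m vecU U k w) j 0 * op_step U m k.+1 x (q (nth [::] taus j)) u.
Proof.
move=> hk rkK spanK uU; set Kt := Kmat K U k taus; set c := pinv Kt *m vecU U k w.
have [m_span _] := Hpsr x.1 x.2 (hk : (1 <= k.+1 < H)%N) uU.
have wE : vecU U k w = Kt *m c + (vecU U k w - Kt *m c) by rewrite addrC subrK.
rewrite /op_step sum_core_vecU wE mulmxDr (qspan_orth_pinv_resid _ rkK spanK m_span) addr0.
rewrite mulmxA mxE; apply: eq_bigr => j _; rewrite sum_core_vecU mulrC; congr (_ * _).
by rewrite !mxE; apply: eq_bigr => i _; rewrite !mxE.
Qed.

Lemma wsum_norm1_op_prod_le n h pre w : (1 <= h)%N -> (h + n <= H)%N ->
  wsum pre n (fun s => norm1 U (h + n) (op_prod U m h w s)) <= N%:R / alpha * norm1 U h w.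
Proof.
case: n => [|n] h1 hH.
  by rewrite /pol_wsum /= mul1r addn0 ler_peMl ?norm1_ge0 ?UA_div_alpha_ge1.
case: h h1 hH => [|k] // _ hH.
have hk : (k < H)%N by apply: leq_trans hH; rewrite ltnS leq_addr.
have hk1 : (k.+1 < H)%N by apply: leq_trans hH; rewrite addnS ltnS leq_addr.
have [taus [taus_k rkK spanK normK]] := Hcm hk.
set c := pinv (Kmat K U k taus) *m vecU U k w.
have c_le : \sum_j `|c j 0| <= alpha^-1 * norm1 U k.+1 w.
  by rewrite norm1_vecU; apply: le_trans (norm1_mulmx_le _ _) _; rewrite ler_wpM2r ?sumr_ge0.
have split_first s : size s = n.+1 -> norm1 U (k.+1 + n.+1) (op_prod U m k.+1 w s) <=
    \sum_j `|c j 0| * norm1 U (k.+1 + n.+1) (op_prod U m k.+1 (q (nth [::] taus j)) s).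
  case: s => [|x s] // [sn]; rewrite -addSnnS -sn /=.
  rewrite (eq_in_norm1 (g := fun u => \sum_j c j 0 *
    op_prod U m k.+2 (op_step U m k.+1 x (q (nth [::] taus j))) s u)); first exact: norm1_sum_le.
  move=> u uU; rewrite -op_prod_sum; apply: eq_in_op_prod uU => v vU.
  exact: op_step_core_decomp.
apply: le_trans (ler_pol_wsum Hpol _ split_first) _.
rewrite pol_wsum_sum; under eq_bigr do rewrite pol_wsumZ.
apply: le_trans (_ : \sum_j `|c j 0| * N%:R <= _).
  apply: ler_sum => j _; rewrite ler_wpM2l // wsum_norm1_op_prod_pred //.
  by apply/eqP/(allP taus_k)/mem_nth.
by rewrite -mulr_suml; apply: le_trans (ler_wpM2r (ler0n _ _) c_le) _; rewrite mulrC mulrA.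
Qed.

Lemma eps_op_ge0 : 0 <= eps_op.
Proof. by rewrite /eps_op divr_ge0 ?mulr_ge0 ?exprn_ge0 ?ler0n // ltW. Qed.

Lemma norm1_op_step_diff h x b : (1 <= h < H)%N ->
  norm1 U h.+1 (fun u => op_step U m' h x b u - op_step U m h x b u)
  <= Uc%:R * eps_op * norm1 U h b.
Proof.
move=> hh; apply: le_trans (_ : _ <= \sum_(u <- U h.+1) eps_op * norm1 U h b) _.
  rewrite /norm1 big_seq [leRHS]big_seq; apply: ler_sum => u uU.
  rewrite /op_step -sumrB mulr_sumr; apply: le_trans (ler_norm_sum _ _ _) _.
  rewrite big_seq [leRHS]big_seq; apply: ler_sum => v vU.
  by rewrite -mulrBl normrM ler_wpM2r // distrC Hm'.
rewrite sumr_const_seq -[_ *+ size _]mulr_natl mulrA ler_wpM2r ?norm1_ge0 //.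
rewrite ler_wpM2r ?eps_op_ge0 // ler_nat size_core_le_Uc //.
by case/andP: hh => _ ->.
Qed.

(* Each step costs [Uc * eps_op] (operator error) times [N / alpha] (propagation);
   [#|O|] is the total policy weight [\sum_(o, a) pol tau o a] of one step. *)
Definition err_rate : R := N%:R / alpha * Uc%:R * eps_op * #|O|%:R.

Lemma err_rateE : err_rate = eps1 / (4 * H%:R * N%:R).
Proof.
have nz n : (0 < n)%N -> n%:R != 0 :> R by rewrite pnatr_eq0 -lt0n.
rewrite /err_rate /eps_op; field.
by rewrite !nz ?UA_card_gt0 ?U_card_gt0 ?card_obs_gt0 // gt_eqF.
Qed.

Lemma err_rate_ge0 : 0 <= err_rate.
Proof. by rewrite err_rateE divr_ge0 ?mulr_ge0 ?ler0n // ltW. Qed.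

Lemma err_budget k : (k < H)%N -> err_rate * (k%:R * (N%:R + eps1)) + err_rate <= eps1.
Proof.
move=> kH; have N_ge1 : 1 <= N%:R :> R by rewrite ler1n UA_card_gt0.
have kH' : k%:R + 1 <= H%:R :> R by rewrite natr1 ler_nat.
have k_ge0 : 0 <= k%:R :> R := ler0n _ _.
have budget : k%:R * (N%:R + eps1) + 1 <= 4 * H%:R * N%:R.
  have keps : k%:R * eps1 <= k%:R * N%:R by rewrite ler_wpM2l.
  have NkH : N%:R * (k%:R + 1) <= N%:R * H%:R :> R by rewrite ler_wpM2l ?ler0n.
  have NH_ge0 : 0 <= N%:R * H%:R :> R by rewrite mulr_ge0 ?ler0n.
  rewrite mulrDr; lra.
rewrite -[X in _ + X]mulr1 -mulrDr err_rateE mulrAC ler_pdivrMr; last first.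
  by rewrite !mulr_gt0 ?ltr0n ?H_gt0 ?UA_card_gt0.
by rewrite ler_wpM2l // ltW.
Qed.

Definition pert_mass h pre (b : test -> R) j : R :=
  wsum pre j (fun s => norm1 U (h + j) (op_prod U m' h b s)).

Lemma pert_mass0 h pre b : pert_mass h pre b 0 = norm1 U h b.
Proof. by rewrite /pert_mass /pol_wsum /= mul1r addn0. Qed.

Lemma pert_mass_cons h pre b j : pert_mass h pre b j.+1 =
  \sum_(x : O * A) pol pre x.1 x.2 * pert_mass h.+1 (rcons pre x) (op_step U m' h x b) j.
Proof. by rewrite /pert_mass pol_wsum_cons addSnnS. Qed.

Lemma wsum_norm1_op_prod_diff n h pre b : (1 <= h)%N -> (h + n <= H)%N ->
  wsum pre n (fun s => norm1 U (h + n) (fun u => op_prod U m' h b s u - op_prod U m h b s u))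
  <= err_rate * \sum_(j < n) pert_mass h pre b j.
Proof.
elim: n h pre b => [|n IH] h pre b h1 hH.
  by rewrite big_ord0 mulr0 /pol_wsum /= /norm1 big1 ?mulr0 // => u _; rewrite subrr normr0.
have hh : (1 <= h < H)%N by rewrite h1 (leq_trans _ hH) // addnS ltnS leq_addr.
have hH' : (h.+1 + n <= H)%N by rewrite addSnnS.
set c0 := N%:R / alpha * (Uc%:R * eps_op * norm1 U h b).
set pm := fun x j => pert_mass h.+1 (rcons pre x) (op_step U m' h x b) j.
have first_step x : wsum (rcons pre x) n (fun s => norm1 U (h + n.+1) (fun u =>
      op_prod U m' h.+1 (op_step U m' h x b) s u - op_prod U m h.+1 (op_step U m h x b) s u))
    <= err_rate * \sum_(j < n) pm x j + c0.
  set b1 := op_step U m' h x b; set b2 := op_step U m h x b.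
  apply: le_trans (_ : wsum (rcons pre x) n (fun s =>
      norm1 U (h.+1 + n) (fun u => op_prod U m' h.+1 b1 s u - op_prod U m h.+1 b1 s u) +
      norm1 U (h.+1 + n) (op_prod U m h.+1 (fun v => b1 v - b2 v) s)) <= _).
    apply: ler_pol_wsum => // s _; rewrite -addSnnS /norm1 -big_split /=.
    by apply: ler_sum => u _; rewrite op_prodB ler_distD.
  rewrite pol_wsumD //; apply: lerD; first exact: IH.
  apply: le_trans (wsum_norm1_op_prod_le _ _ (ltn0Sn h) hH') _.
  by rewrite /c0 ler_wpM2l ?UA_div_alpha_ge0 ?norm1_op_step_diff.
rewrite pol_wsum_cons big_ord_recl.
apply: le_trans (ler_sum _ (fun x _ => ler_wpM2l (act_prob_ge0 Hpol _ _ _) (first_step x))) _.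
rewrite pert_mass0; under [X in _ <= _ * (_ + X)]eq_bigr do rewrite lift0 pert_mass_cons.
rewrite le_eqVlt; apply/predU1l.
rewrite (eq_bigr (fun x => err_rate * \sum_(j < n) pol pre x.1 x.2 * pm x j +
  pol pre x.1 x.2 * c0)) => [|x _]; last by rewrite mulrDr mulrCA mulr_sumr.
rewrite big_split /= -mulr_sumr -mulr_suml sum_act_prob_pairs // exchange_big /=.
by rewrite /c0 /err_rate; ring.
Qed.

Lemma wsum_norm1_init_err k : (k < H)%N ->
  wsum [::] k (fun s => norm1 U (1 + k) (op_prod U m 1 (fun v => q0' v - q [::] v) s))
  <= err_rate.
Proof.
move=> kH; apply: le_trans (wsum_norm1_op_prod_le _ _ (leqnn 1) kH) _.
have q0_le : norm1 U 1 (fun v => q0' v - q [::] v) <= Uc%:R * eps_op.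
  apply: le_trans (_ : _ <= \sum_(u <- U 1) eps_op) _.
    rewrite /norm1 big_seq [leRHS]big_seq; apply: ler_sum => u uU.
    by rewrite distrC; apply: Hq0'.
  rewrite sumr_const_seq -[_ *+ size _]mulr_natl ler_wpM2r ?eps_op_ge0 // ler_nat.
  by rewrite size_core_le_Uc // leqnn H_gt0.
apply: le_trans (_ : N%:R / alpha * Uc%:R * eps_op <= _).
  by rewrite -[in leRHS]mulrA ler_wpM2l ?UA_div_alpha_ge0.
apply: ler_peMr; last by rewrite ler1n card_obs_gt0.
by rewrite mulr_ge0 ?eps_op_ge0 // mulr_ge0 ?UA_div_alpha_ge0.
Qed.

Lemma wsum_norm1_fwd_err k : (k < H)%N ->
  wsum [::] k (fun s => norm1 U (1 + k)
    (fun u => op_prod U m' 1 q0' s u - op_prod U m 1 (q [::]) s u)) <= eps1.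
Proof.
elim/ltn_ind: k => k IHk kH.
have pert_mass_le j : (j < k)%N -> pert_mass 1 [::] q0' j <= N%:R + eps1.
  move=> jk; have jH := ltn_trans jk kH.
  apply: le_trans (_ : wsum [::] j (fun s => norm1 U (1 + j) (op_prod U m 1 (q [::]) s) +
      norm1 U (1 + j) (fun u => op_prod U m' 1 q0' s u - op_prod U m 1 (q [::]) s u)) <= _).
    apply: ler_pol_wsum => // s _; rewrite /norm1 -big_split; apply: ler_sum => u _ /=.
    by rewrite -[X in `|X| <= _](subrKC (op_prod U m 1 (q [::]) s u)) ler_normD.
  by rewrite pol_wsumD // lerD ?IHk // wsum_norm1_op_prod_pred.
have E_le : wsum [::] k (fun s => norm1 U (1 + k)
    (fun u => op_prod U m' 1 q0' s u - op_prod U m 1 q0' s u)) <= err_rate * (k%:R * (N%:R + eps1)).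
  apply: le_trans (wsum_norm1_op_prod_diff _ _ (leqnn 1) kH) _.
  rewrite ler_wpM2l ?err_rate_ge0 //; apply: le_trans (_ : \sum_(j < k) (N%:R + eps1) <= _).
    by apply: ler_sum => j _; apply: pert_mass_le.
  by rewrite sumr_const card_ord mulr_natl.
apply: le_trans _ (err_budget kH); apply: le_trans _ (lerD E_le (wsum_norm1_init_err kH)).
rewrite -pol_wsumD //; apply: ler_pol_wsum => // s _; rewrite /norm1 -big_split.
by apply: ler_sum => u _ /=; rewrite op_prodB ler_distD.
Qed.

Lemma sum_obs_le_norm1 (g : test -> R) : \sum_o `|g ([:: o], [::])| <= norm1 U H g.
Proof.
rewrite /norm1 -(big_map (fun o : O => ([:: o], [::] : seq A)) xpredT (fun u => `|g u|)).
apply: ler_sum_subset_uniq => // [||u /mapP[o _ ->]//].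
- by rewrite map_inj_uniq ?index_enum_uniq // => o o' [].
- by apply: core_uniq; rewrite H_gt0 leqnn.
Qed.

Lemma traj_diff_rcons s x : size s = H.-1 ->
  `|Ptraj' U m' q0' pol (rcons s x) - Ptraj K pol (rcons s x)| =
  pol_prob_aux pol [::] s * (pol s x.1 x.2 *
    `|op_prod U m' 1 q0' s ([:: x.1], [::]) - op_prod U m 1 (q [::]) s ([:: x.1], [::])|).
Proof.
case: x => o a sH; rewrite /Ptraj' /Ptraj /pol_prob fwd_eval_rcons traj_prob_auxE.
rewrite -/(hist_prob K _) -(op_prod_pred0_obs _ a sH) pol_prob_aux_rcons cat0s -mulrBl normrM.
rewrite [`|pol_prob_aux _ _ _ * _|]ger0_norm ?mulr_ge0 ?pol_prob_aux_ge0 ?act_prob_ge0 //.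
by rewrite mulrC -mulrA.
Qed.

Lemma sum_traj_diff_le :
  \sum_(t : H.-tuple (O * A)) `|Ptraj' U m' q0' pol t - Ptraj K pol t| <= eps1.
Proof.
rewrite (sum_hist_tuple H (fun s => `|Ptraj' U m' q0' pol s - Ptraj K pol s|)).
have H1_lt : (H.-1 < H)%N by rewrite ltn_predL.
rewrite -(prednK H_gt0) sum_hist_rcons.
apply: le_trans _ (wsum_norm1_fwd_err H1_lt); rewrite add1n prednK //.
apply: ler_sum_hist => s sH; under eq_bigr do rewrite traj_diff_rcons //.
rewrite -mulr_sumr ler_wpM2l ?pol_prob_aux_ge0 //.
rewrite -(pair_bigA _ (fun o a => pol s o a * `|op_prod U m' 1 q0' s ([:: o], [::]) -
  op_prod U m 1 (q [::]) s ([:: o], [::])|)) /=.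
under eq_bigr do rewrite -mulr_suml sum_act_prob // mul1r.
exact: sum_obs_le_norm1.
Qed.

End Perturbation.

Theorem lemma17 (R : realFieldType) (O A : finType) (H : nat)
    (U : nat -> seq (test O A)) (K : hist O A -> O -> R)
    (m : nat -> O -> A -> test O A -> test O A -> R)
    (alpha eps1 : R)
    (m' : nat -> O -> A -> test O A -> test O A -> R)
    (q0' : test O A -> R) :
  (0 < H)%N ->
  is_process K ->
  core_test_sets K U H ->
  0 < alpha ->
  (forall k, (k < H)%N -> core_matrix_bound K U k alpha) ->
  (forall o : O, ([:: o], [::]) \in U H) ->
  psr_params K U H m ->
  0 < eps1 -> eps1 <= (UA_card U H)%:R ->
  let eps_op := alpha * eps1 /
      (4 * H%:R * ((UA_card U H)%:R) ^+ 2 * (U_card U H)%:R * #|O|%:R) in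
  (forall h o a u v, (1 <= h < H)%N -> u \in U h.+1 -> v \in U h ->
     `|m h o a u v - m' h o a u v| <= eps_op) ->
  (forall u, u \in U 1%N -> `|Ptest K u [::] - q0' u| <= eps_op) ->
  forall pol : hist O A -> O -> A -> R, is_policy pol ->
    \sum_(t : H.-tuple (O * A)%type)
       `|Ptraj' U m' q0' pol (tval t) - Ptraj K pol (tval t)| <= eps1.
Proof.
move=> H_gt0 HK Hcore alpha_gt0 Hcm obs_core Hpsr eps1_gt0 eps1_le eps_op Hm' Hq0' pol Hpol.
exact: (sum_traj_diff_le H_gt0 HK Hcore alpha_gt0 Hcm obs_core Hpsr eps1_gt0 eps1_le Hm' Hq0' Hpol).
Qed.
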